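(* Let $P$ be a minimal Fano polytope in $\mathbb{R}^3$ with vertex set $\{x_1,x_2,x_3,x_4,x_5\}$ such that $x_2,x_3,x_4,x_5$ are coplanar and are the vertices of a parallelogram. Then, up to the action of $GL(3,\mathbb{Z})$, $P$ is the convex hull of $\{(1,0,0),(0,1,0),(-1,-1,0),(1,1,1),(0,0,-1)\}$.
   Context: A Fano polytope is a convex polytope $P\subset\mathbb{R}^3$ with vertices in $\mathbb{Z}^3$ such that the only lattice point of $P$ that is not a vertex is the origin, which lies strictly in the interior of $P$. A Fano polytope with vertex set $\{x_1,\ldots,x_k\}$ is minimal if for every $j$ the convex hull of $\{x_1,\ldots,x_k\}\setminus\{x_j\}$ is not a Fano polytope. *)

From mathcomp Require Import all_boot all_order all_algebra.
From mathcomp Require Import reals.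
Set Implicit Arguments. Unset Strict Implicit. Unset Printing Implicit Defensive.
Import Order.TTheory GRing.Theory Num.Theory.
Local Open Scope ring_scope.

Definition lat := 'cV[int]_3.

Definition pt (a b c : int) : lat := \col_(i < 3) nth 0 [:: a; b; c] i.

Definition toR (R : realType) (v : lat) : 'cV[R]_3 := map_mx (fun z : int => z%:~R) v.

Definition in_hull (R : realType) (V : seq lat) (p : 'cV[R]_3) : Prop :=
  exists c : 'I_(size V) -> R,
    (forall i, 0 <= c i) /\ \sum_i c i = 1 /\
    p = \sum_i c i *: toR R (nth 0 V i).

Definition origin_interior (R : realType) (V : seq lat) : Prop :=
  exists e : R, 0 < e /\
    forall y : 'cV[R]_3, \sum_(i < 3) y i 0 ^+ 2 < e ^+ 2 -> in_hull V y.

Definition fano (R : realType) (V : seq lat) : Prop :=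
  (forall v, v \in V -> ~ in_hull (rem v V) (toR R v)) /\
  (forall p : lat, in_hull V (toR R p) -> p \in V \/ p = 0) /\
  origin_interior R V.

Definition minimal_fano (R : realType) (V : seq lat) : Prop :=
  fano R V /\ forall v, v \in V -> ~ fano R (rem v V).

Definition GL3Z (A : 'M[int]_3) : bool := A \in unitmx.

From mathcomp Require Import all_boot all_order all_algebra.
From mathcomp Require Import reals.
From mathcomp Require Import ring lra zify.
Set Implicit Arguments. Unset Strict Implicit. Unset Printing Implicit Defensive.
Import Order.TTheory GRing.Theory Num.Theory.
Local Open Scope ring_scope.

(* Write the vertices in the basis [y2, y3 - y2, y5 - y2], scaled by
   [det2 = det(B)^2] so that coordinates stay integral: [y2, ..., y5] become the
   square [det2 * (1,0,0), (1,1,0), (1,1,1), (1,0,1)] and [y1] an apex [(a,b,c)].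
   An interior origin admits no nonzero linear form that is nonnegative on all
   vertices, so [a < b], [a < c] and [b, c < 0]; minimality (dropping a base vertex
   loses the interior origin) pins the apex to the axis, [a = 2b] and [b = c].  The
   lattice points [-y1] and [y1 + y2 + y4] on that axis force [b = -det2].  Finally
   every lattice point has coordinates divisible by [det2]: otherwise some image
   [k p + m], with [k] in [{1, -1, 2, -2}] and [m] in the sublattice, lands in the
   polytope without being a vertex.  So the basis is unimodular. *)

Lemma sum3 (T : nmodType) (F : 'I_3 -> T) : \sum_(i < 3) F i = F 0 + F 1 + F 2.
Proof.
rewrite !big_ord_recr big_ord0 /= add0r.
by congr (_ + _ + _); congr F; apply: val_inj.
Qed.

Lemma cV3_ext (T : Type) (Y Z : 'cV[T]_3) :
  Y 0 0 = Z 0 0 -> Y 1 0 = Z 1 0 -> Y 2 0 = Z 2 0 -> Y = Z.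
Proof.
move=> eq0 eq1 eq2; apply/matrixP => i j; rewrite (ord1 j).
by case: i => [[|[|[|//]]] lt_i3]; [move: eq0 | move: eq1 | move: eq2];
  congr (_ = _); congr (_ _ _); apply: val_inj.
Qed.

Lemma ptE (a b c : int) : [/\ pt a b c 0 0 = a, pt a b c 1 0 = b & pt a b c 2 0 = c].
Proof. by rewrite !mxE. Qed.

Lemma pt_inj a b c a' b' c' : pt a b c = pt a' b' c' -> [/\ a = a', b = b' & c = c'].
Proof.
move=> e; have [a0 b0 c0] := ptE a b c; have [a1 b1 c1] := ptE a' b' c'.
by split; [rewrite -a0 -a1 e | rewrite -b0 -b1 e | rewrite -c0 -c1 e].
Qed.

Lemma pt_eta (v : lat) : v = pt (v 0 0) (v 1 0) (v 2 0).
Proof. by apply: cV3_ext; rewrite !mxE. Qed.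

Lemma scale_pt t a b c : t *: pt a b c = pt (t * a) (t * b) (t * c).
Proof. by apply: cV3_ext; rewrite !mxE. Qed.

Lemma add_pt a b c a' b' c' : pt a b c + pt a' b' c' = pt (a + a') (b + b') (c + c').
Proof. by apply: cV3_ext; rewrite !mxE. Qed.

Definition rows3 (s : seq (seq int)) : 'M[int]_3 := \matrix_(i, j) nth 0 (nth [::] s i) j.

Lemma mul_pt (M : 'M[int]_3) a b c :
  M *m pt a b c = pt (M 0 0 * a + M 0 1 * b + M 0 2 * c)
    (M 1 0 * a + M 1 1 * b + M 1 2 * c) (M 2 0 * a + M 2 1 * b + M 2 2 * c).
Proof. by apply: cV3_ext; rewrite !mxE sum3 !mxE. Qed.

(* Lattice symmetries of the base square [(1,0,0), (1,1,0), (1,1,1), (1,0,1)];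
   they reduce the four faces obtained by dropping a base vertex to one. *)
Definition flip_y : 'M[int]_3 := rows3 [:: [:: 1; 0; 0]; [:: 1; -1; 0]; [:: 0; 0; 1]].
Definition flip_z : 'M[int]_3 := rows3 [:: [:: 1; 0; 0]; [:: 0; 1; 0]; [:: 1; 0; -1]].

Lemma flip_y_pt a b c : flip_y *m pt a b c = pt a (a - b) c.
Proof. by rewrite mul_pt !mxE /=; congr pt; ring. Qed.

Lemma flip_z_pt a b c : flip_z *m pt a b c = pt a b (a - c).
Proof. by rewrite mul_pt !mxE /=; congr pt; ring. Qed.

Lemma flip_yK : flip_y *m flip_y = 1.
Proof.
apply/matrixP => i j; rewrite !mxE sum3 !mxE.
by case: i => [[|[|[|?]]] ?]; case: j => [[|[|[|?]]] ?].
Qed.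

Lemma flip_zK : flip_z *m flip_z = 1.
Proof.
apply/matrixP => i j; rewrite !mxE sum3 !mxE.
by case: i => [[|[|[|?]]] ?]; case: j => [[|[|[|?]]] ?].
Qed.

Lemma scalemx_int_inj m n (d : int) (A B : 'M[int]_(m, n)) : d != 0 ->
  d *: A = d *: B -> A = B.
Proof.
move=> d0 e; apply/matrixP => i j; apply: (mulfI d0).
by have := congr1 (fun M : 'M_(m, n) => M i j) e; rewrite !mxE.
Qed.

Definition normal_form : 'M[int]_3 := rows3 [:: [:: 1; 0; -1]; [:: 0; 1; 0]; [:: 0; 1; -1]].

Lemma normal_form_unit : normal_form \in unitmx.
Proof.
have : normal_form *m rows3 [:: [:: 1; 1; -1]; [:: 0; 1; 0]; [:: 0; 1; -1]] = 1.
  apply/matrixP => i j; rewrite !mxE sum3 !mxE.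
  by case: i => [[|[|[|?]]] ?]; case: j => [[|[|[|?]]] ?].
by case/mulmx1_unit.
Qed.

Section UnitPyramidCovering.
Variable R : realType.
Implicit Types x y z : R.

Definition int_point x y z :=
  [/\ x \is a Num.int, y \is a Num.int & z \is a Num.int].

(* The pyramid [conv {(1,0,0), (1,1,0), (1,1,1), (1,0,1), (-2,-1,-1)}], by its facets. *)
Definition in_unit_pyramid x y z :=
  [/\ x <= 1, x - 1 <= 3 * y, 3 * y <= 2 * x + 1, x - 1 <= 3 * z & 3 * z <= 2 * x + 1].

Definition nonint_image_in_pyramid x y z := exists k i j l : int,
  in_unit_pyramid (k%:~R * x + i%:~R) (k%:~R * y + j%:~R) (k%:~R * z + l%:~R) /\
  ~ int_point (k%:~R * x + i%:~R) (k%:~R * y + j%:~R) (k%:~R * z + l%:~R).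

Lemma nonint_open01 x : 0 < x -> x < 1 -> x \isn't a Num.int.
Proof. move=> x0 x1; apply/negP => /intrP[m xm]; move: x0 x1; rewrite xm ltr0z ltrz1; lia. Qed.

Lemma int_num_unit_affine (k i : int) x : (k = 1 \/ k = -1) ->
  (k%:~R * x + i%:~R \is a Num.int) = (x \is a Num.int).
Proof. by rewrite rpredDr ?intr_int //; case=> ->; rewrite ?mul1r // mulN1r rpredN. Qed.

Lemma nonint_image_unit (k i j l : int) x y z : (k = 1 \/ k = -1) -> ~ int_point x y z ->
  in_unit_pyramid (k%:~R * x + i%:~R) (k%:~R * y + j%:~R) (k%:~R * z + l%:~R) ->
  nonint_image_in_pyramid x y z.
Proof.
move=> k1 nxyz hP; exists k, i, j, l; split=> // -[].
by rewrite !int_num_unit_affine //; move=> *; apply: nxyz.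
Qed.

Lemma not_int_point_off_axis x y z :
  0 < x -> x <= 1 -> x / 2 - 1 / 3 < y -> y < x / 2 + 1 / 3 -> ~ int_point x y z.
Proof.
move=> x0 x1 y0 y1 [xZ yZ _].
have x_eq1 : x = 1.
  apply/eqP; rewrite eq_le x1 /=; apply: contraLR xZ; rewrite -ltNge => ?.
  exact: nonint_open01.
by move: yZ; apply/negP/nonint_open01; lra.
Qed.

(* Reduce [x] to [x0] in [0,1); [w] is [y - x0 / 2] or [z - x0 / 2] reduced mod 1.
   The section of the pyramid at height [x0] has half-width [(x0 + 2) / 6], that
   of its reflection [(3 - x0) / 6]; as they sum to [5/6 > 1/2] every [w] is
   covered by one of them.  When [y] needs one and [z] the other, doubling helps. *)
Lemma frac_cases (x0 w : R) : 0 <= x0 < 1 -> 0 <= w < 1 ->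
  [/\ (exists d : int, - (x0 + 2) / 6 <= w - d%:~R <= (x0 + 2) / 6)
        \/ (1 / 2 - (3 - x0) / 6 <= w <= 1 / 2 + (3 - x0) / 6),
      (1 / 2 - (3 - x0) / 6 <= w <= 1 / 2 + (3 - x0) / 6)
        \/ (exists d : int, - x0 / 6 < w - d%:~R < x0 / 6) &
      (exists d : int, - (x0 + 2) / 6 <= w - d%:~R <= (x0 + 2) / 6)
        \/ ((x0 + 2) / 6 < w < 1 - (x0 + 2) / 6)].
Proof.
move=> /andP[x00 x01] /andP[w0 w1].
have w_0 : w - (0 : int)%:~R = w by rewrite subr0.
have w_1 : w - (1 : int)%:~R = w - 1 by [].
split.
- have [?|?] := leP w ((x0 + 2) / 6); first by left; exists 0; rewrite w_0; apply/andP; lra.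
  have [?|?] := leP (1 - (x0 + 2) / 6) w; first by left; exists 1; rewrite w_1; apply/andP; lra.
  by right; apply/andP; lra.
- have [?|?] := ltP w (x0 / 6); first by right; exists 0; rewrite w_0; apply/andP; lra.
  have [?|?] := ltP (1 - x0 / 6) w; first by right; exists 1; rewrite w_1; apply/andP; lra.
  by left; apply/andP; lra.
- have [?|?] := leP w ((x0 + 2) / 6); first by left; exists 0; rewrite w_0; apply/andP; lra.
  have [?|?] := leP (1 - (x0 + 2) / 6) w; first by left; exists 1; rewrite w_1; apply/andP; lra.
  by right; apply/andP; lra.
Qed.

Let intr2 : (2 : int)%:~R = 2 :> R. Proof. by []. Qed.
Let intr_simpl := (intrD, intrN, intrM, intr2).

Section ReducedPoint.
Variables (x y z : R) (fx fy fz : int).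
Let x0 := x - fx%:~R.
Let u := y - x0 / 2 - fy%:~R.
Let v := z - x0 / 2 - fz%:~R.
Hypothesis x0_range : 0 <= x0 < 1.

Lemma nonint_image_translate (dy dz : int) : ~ int_point x y z ->
  - (x0 + 2) / 6 <= u - dy%:~R <= (x0 + 2) / 6 ->
  - (x0 + 2) / 6 <= v - dz%:~R <= (x0 + 2) / 6 ->
  nonint_image_in_pyramid x y z.
Proof.
move=> nxyz /andP[u1 u2] /andP[v1 v2]; move: x0_range u1 u2 v1 v2 => /andP[].
rewrite /u /v /x0 => *.
apply: (@nonint_image_unit 1 (- fx) (- fy - dy) (- fz - dz)) => //; first by left.
by rewrite !intr_simpl; split; lra.
Qed.

Lemma nonint_image_reflect : ~ int_point x y z ->
  1 / 2 - (3 - x0) / 6 <= u <= 1 / 2 + (3 - x0) / 6 ->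
  1 / 2 - (3 - x0) / 6 <= v <= 1 / 2 + (3 - x0) / 6 ->
  nonint_image_in_pyramid x y z.
Proof.
move=> nxyz /andP[u1 u2] /andP[v1 v2]; move: x0_range u1 u2 v1 v2 => /andP[].
rewrite /u /v /x0 => *.
apply: (@nonint_image_unit (-1) (fx + 1) (fy + 1) (fz + 1)) => //; first by right.
by rewrite !intr_simpl; split; lra.
Qed.

Lemma nonint_image_double (dy : int) :
  - x0 / 6 < u - dy%:~R < x0 / 6 -> (x0 + 2) / 6 < v < 1 - (x0 + 2) / 6 ->
  nonint_image_in_pyramid x y z.
Proof.
move=> /andP[u1 u2] /andP[v1 v2]; have [half|half] := ltP x0 (1 / 2);
  move: x0_range u1 u2 v1 v2 half => /andP[]; rewrite /u /v /x0 => *.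
  exists 2, (- (2 * fx)), (- (2 * fy) - 2 * dy), (- (2 * fz) - 1).
  rewrite !intr_simpl; split; first by split; lra.
  by apply: not_int_point_off_axis; lra.
exists (-2), (2 * fx + 2), (2 * fy + 1 + 2 * dy), (2 * fz + 2).
rewrite !intr_simpl; split; first by split; lra.
by apply: not_int_point_off_axis; lra.
Qed.

End ReducedPoint.

Lemma nonint_image_in_pyramid_sym x y z :
  nonint_image_in_pyramid x z y -> nonint_image_in_pyramid x y z.
Proof.
move=> [k [i [j [l [[? ? ? ? ?] nint]]]]]; exists k, i, l, j; split=> //.
by case=> ? ? ?; apply: nint.
Qed.

Lemma floor_frac (x : R) : 0 <= x - (Num.floor x)%:~R < 1.
Proof. by have := floor_le x; have := floorD1_gt x; rewrite intrD; move=> *; apply/andP; lra. Qed.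

Lemma unit_pyramid_covering x y z : ~ int_point x y z -> nonint_image_in_pyramid x y z.
Proof.
move=> nxyz; set x0 := x - (Num.floor x)%:~R.
have x0_range : 0 <= x0 < 1 by exact: floor_frac.
have [cu1 cu2 cu3] := frac_cases x0_range (floor_frac (y - x0 / 2)).
have [cv1 cv2 cv3] := frac_cases x0_range (floor_frac (z - x0 / 2)).
pose fy := Num.floor (y - x0 / 2); pose fz := Num.floor (z - x0 / 2).
have translate := @nonint_image_translate x y z (Num.floor x) fy fz x0_range _ _ nxyz.
have reflect := @nonint_image_reflect x y z (Num.floor x) fy fz x0_range nxyz.
have double := @nonint_image_double x y z (Num.floor x) fy fz x0_range.
case: cu1 => [[dy hy]|hy].
  case: cv1 => [[dz hz]|hz]; first exact: translate hy hz.
  case: cu2 => [hy'|[ey hey]]; first exact: reflect hy' hz.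
  case: cv3 => [[dz hz']|hz']; [exact: translate hy hz' | exact: double hey hz'].
case: cv1 => [[dz hz]|hz]; last exact: reflect hy hz.
case: cv2 => [hz'|[ez hez]]; first exact: reflect hy hz'.
case: cu3 => [[dy hy']|hy']; first exact: translate hy' hz.
apply: nonint_image_in_pyramid_sym.
exact: (@nonint_image_double x z y (Num.floor x) fz fy x0_range _ hez hy').
Qed.

End UnitPyramidCovering.

Section ConvexHull.
Variable R : realType.
Implicit Types (V W : seq lat) (Y Z : 'cV[R]_3).
Local Notation X := (toR R).
Local Notation "M %:RM" := (map_mx (fun z : int => z%:~R : R) M) (at level 2).

Lemma toR_mul (M : 'M[int]_3) (p : lat) : X (M *m p) = M%:RM *m X p.
Proof. exact: map_mxM. Qed.

Lemma nth_map_mulmx (M : 'M[int]_3) V i : nth 0 (map (mulmx M) V) i = M *m nth 0 V i.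
Proof.
have [lt_iV|le_Vi] := ltnP i (size V); first exact: nth_map.
by rewrite !nth_default ?size_map // mulmx0.
Qed.

Lemma sum_cast_ord {T : nmodType} {n m} (eq_nm : n = m) (F : 'I_m -> T) :
  \sum_(i < n) F (cast_ord eq_nm i) = \sum_(i < m) F i.
Proof. by case: m / eq_nm F => F; apply: eq_bigr => i _; rewrite cast_ord_id. Qed.

Lemma in_hull4 (t1 t2 t3 t4 : lat) (c1 c2 c3 c4 : R) Y :
  [/\ 0 <= c1, 0 <= c2, 0 <= c3 & 0 <= c4] -> c1 + c2 + c3 + c4 = 1 ->
  Y = c1 *: X t1 + c2 *: X t2 + c3 *: X t3 + c4 *: X t4 ->
  in_hull [:: t1; t2; t3; t4] Y.
Proof.
move=> [? ? ? ?] sum1 ->; exists (fun i : 'I_4 => nth 0 [:: c1; c2; c3; c4] i).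
split; first by case=> [[|[|[|[|?]]]] ?].
by split; rewrite !big_ord_recr big_ord0 /= add0r.
Qed.

Lemma in_hull5 (t1 t2 t3 t4 t5 : lat) (c1 c2 c3 c4 c5 : R) Y :
  [/\ 0 <= c1, 0 <= c2, 0 <= c3, 0 <= c4 & 0 <= c5] -> c1 + c2 + c3 + c4 + c5 = 1 ->
  Y = c1 *: X t1 + c2 *: X t2 + c3 *: X t3 + c4 *: X t4 + c5 *: X t5 ->
  in_hull [:: t1; t2; t3; t4; t5] Y.
Proof.
move=> [? ? ? ? ?] sum1 ->; exists (fun i : 'I_5 => nth 0 [:: c1; c2; c3; c4; c5] i).
split; first by case=> [[|[|[|[|[|?]]]]] ?].
by split; rewrite !big_ord_recr big_ord0 /= add0r.
Qed.

Lemma sum_first_occurrence (M : zmodType) W (x : lat) (m : M) : x \in W ->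
  \sum_(i < size W) (if (x == nth 0 W i) && (i == index x W :> nat) then m else 0) = m.
Proof.
move=> xW; have iW : (index x W < size W)%N by rewrite index_mem.
rewrite (bigD1 (Ordinal iW)) //= nth_index // !eqxx big1 ?addr0 // => i ne_ix.
by case: ifP => // /andP[_ /eqP i_x]; case/eqP: ne_ix; apply: val_inj.
Qed.

Lemma in_hull_subset V W Y : {subset V <= W} -> in_hull V Y -> in_hull W Y.
Proof.
move=> sVW [c [c0 [c1 ->]]].
pose hit j (i : 'I_(size W)) := (nth 0 V j == nth 0 W i) && (i == index (nth 0 V j) W :> nat).
have merge (M : zmodType) (F : 'I_(size V) -> M) :
    \sum_(i < size W) \sum_(j < size V) (if hit j i then F j else 0) = \sum_j F j.
  by rewrite exchange_big; apply: eq_bigr => j _; rewrite sum_first_occurrence ?sVW ?mem_nth.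
exists (fun i => \sum_(j < size V) (if hit j i then c j else 0)); split; [|split].
- by move=> i; apply: sumr_ge0 => j _; case: ifP.
- by rewrite merge.
- rewrite -merge; apply: eq_bigr => i _; rewrite scaler_suml; apply: eq_bigr => j _.
  by case: ifP => [/andP[/eqP -> _]|]; rewrite ?scale0r.
Qed.

Lemma in_hull_perm V W Y : perm_eq V W -> in_hull V Y -> in_hull W Y.
Proof. by move=> pVW; apply: in_hull_subset => x; rewrite (perm_mem pVW). Qed.

Lemma origin_interior_perm V W : perm_eq V W -> origin_interior R V -> origin_interior R W.
Proof. by move=> pVW [e [e0 inV]]; exists e; split=> // Y /inV; apply: in_hull_perm. Qed.

Lemma in_hull_map (M : 'M[int]_3) V Y : M%:RM \in unitmx ->
  in_hull (map (mulmx M) V) (M%:RM *m Y) <-> in_hull V Y.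
Proof.
move=> Mu; have eq_size := size_map (mulmx M) V.
split=> -[c [c0 [c1 cY]]].
  exists (fun j => c (cast_ord (esym eq_size) j)); split=> //; split.
    by rewrite sum_cast_ord.
  apply: (can_inj (mulKmx Mu)); rewrite cY mulmx_sumr -(sum_cast_ord eq_size).
  by apply: eq_bigr => i _; rewrite nth_map_mulmx cast_ordK toR_mul scalemxAr.
exists (fun i => c (cast_ord eq_size i)); split=> //; split.
  by rewrite sum_cast_ord.
rewrite cY mulmx_sumr -(sum_cast_ord eq_size).
by apply: eq_bigr => i _; rewrite nth_map_mulmx toR_mul scalemxAr.
Qed.

Definition box_interior V :=
  exists2 e : R, 0 < e & forall Y, (forall j, `|Y j 0| <= e) -> in_hull V Y.

Lemma origin_interior_box V : origin_interior R V <-> box_interior V.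
Proof.
split=> [[e [e0 inV]]|[e e0 inV]].
  exists (e / 2) => [|Y Ye]; first exact: divr_gt0.
  apply: inV; rewrite sum3; have sq j : Y j 0 ^+ 2 <= (e / 2) ^+ 2.
    by move: (Ye j); rewrite ler_norml => /andP[? ?]; rewrite !expr2; nra.
  by have := sq 0; have := sq 1; have := sq 2; rewrite !expr2; nra.
exists e; split=> // Y Ye; apply: inV => j; rewrite ler_norml.
have : Y j 0 ^+ 2 < e ^+ 2.
  apply: le_lt_trans Ye; rewrite (bigD1 j) //= lerDl.
  by apply: sumr_ge0 => i _; apply: sqr_ge0.
by rewrite !expr2 => ?; apply/andP; split; nra.
Qed.

Lemma coord_le_sum_norm (v : 'cV[R]_3) j : `|v j 0| <= \sum_k `|v k 0|.
Proof. by rewrite (bigD1 j) //= lerDl; apply: sumr_ge0. Qed.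

Lemma mx_box_bound (K : 'M[R]_3) : exists2 s : R, 0 < s &
  forall Y d, (forall j, `|Y j 0| <= d) -> forall i, `|(K *m Y) i 0| <= s * d.
Proof.
exists (1 + \sum_i \sum_j `|K i j|) => [|Y d Yd i].
  by rewrite ltr_pwDl // sumr_ge0 // => i _; apply: sumr_ge0.
have d0 : 0 <= d by apply: le_trans (Yd 0); apply: normr_ge0.
rewrite mxE; apply: le_trans (ler_norm_sum _ _ _) _.
apply: (@le_trans _ _ (\sum_j `|K i j| * d)).
  by apply: ler_sum => j _; rewrite normrM ler_wpM2l.
rewrite -mulr_suml ler_wpM2r // ler_wpDl // [leRHS](bigD1 i) //= lerDl.
by apply: sumr_ge0 => k _; apply: sumr_ge0.
Qed.

Lemma origin_interior_lin V W (K : 'M[R]_3) :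
  (forall Y, in_hull V (K *m Y) -> in_hull W Y) ->
  origin_interior R V -> origin_interior R W.
Proof.
move=> VW; rewrite !origin_interior_box => -[e e0 inV].
have [s s0 Ks] := mx_box_bound K.
exists (e / s) => [|Y Ye]; first exact: divr_gt0.
apply/VW/inV => j; have := Ks Y (e / s) Ye j.
by rewrite mulrC divfK ?gt_eqF.
Qed.

Lemma origin_interior_map (M : 'M[int]_3) V : M%:RM \in unitmx ->
  origin_interior R (map (mulmx M) V) <-> origin_interior R V.
Proof.
move=> Mu; split.
  by apply: (origin_interior_lin (K := M%:RM)) => Y /(in_hull_map _ _ Mu).
apply: (origin_interior_lin (K := invmx M%:RM)) => Y.
by rewrite -{2}(mulKVmx Mu Y) in_hull_map.
Qed.

Lemma in_hull_form_ge0 V (v : 'rV[R]_3) Y :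
  (forall x, x \in V -> 0 <= (v *m X x) 0 0) -> in_hull V Y -> 0 <= (v *m Y) 0 0.
Proof.
move=> vV [c [c0 [_ ->]]]; rewrite mulmx_sumr summxE.
by apply: sumr_ge0 => i _; rewrite -scalemxAr mxE mulr_ge0 ?vV ?mem_nth.
Qed.

Lemma origin_interior_scale V Z : origin_interior R V ->
  exists2 t : R, 0 < t & in_hull V (t *: Z).
Proof.
rewrite origin_interior_box => -[e e0 inV].
have S0 : 0 < 1 + \sum_k `|Z k 0| by rewrite ltr_pwDl // sumr_ge0.
exists (e / (1 + \sum_k `|Z k 0|)); first exact: divr_gt0.
apply: inV => j; rewrite mxE normrM gtr0_norm ?divr_gt0 // mulrAC ler_pdivrMr //.
by apply: ler_wpM2l; [exact: ltW | apply: ler_wpDl; [|exact: coord_le_sum_norm]].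
Qed.

Lemma origin_interior_form_ge0 V (v : 'rV[R]_3) : origin_interior R V ->
  (forall x, x \in V -> 0 <= (v *m X x) 0 0) -> v = 0.
Proof.
move=> Vint vV; have [t t0 inV] := origin_interior_scale (- v^T) Vint.
have vv : (v *m v^T) 0 0 = \sum_j v 0 j ^+ 2.
  by rewrite mxE; apply: eq_bigr => j _; rewrite mxE expr2.
have := in_hull_form_ge0 vV inV.
have -> : v *m (t *: - v^T) = (- t) *: (v *m v^T).
  by rewrite scalerN mulmxN -scalemxAr scaleNr.
rewrite mxE vv mulNr oppr_ge0 pmulr_rle0 // => sq_le0.
have : \sum_j v 0 j ^+ 2 == 0 by rewrite eq_le sq_le0 sumr_ge0 // => j _; apply: sqr_ge0.
rewrite psumr_eq0 => [/allP v0|j _]; last exact: sqr_ge0.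
apply/rowP => j; rewrite mxE; apply/eqP; rewrite -sqrf_eq0.
exact: implyP (v0 j (mem_index_enum j)) isT.
Qed.

Definition affine3 (f : R -> R -> R -> R) := forall p0 p1 p2,
  f p0 p1 p2 = f 0 0 0 + p0 * (f 1 0 0 - f 0 0 0) + p1 * (f 0 1 0 - f 0 0 0)
               + p2 * (f 0 0 1 - f 0 0 0).

Lemma affine3_ge0_near0 f : affine3 f -> 0 < f 0 0 0 -> exists2 e : R, 0 < e &
  forall p0 p1 p2, `|p0| <= e -> `|p1| <= e -> `|p2| <= e -> 0 <= f p0 p1 p2.
Proof.
move=> f_aff f0; set g0 := f 1 0 0 - f 0 0 0; set g1 := f 0 1 0 - f 0 0 0.
set g2 := f 0 0 1 - f 0 0 0; set G := 1 + `|g0| + `|g1| + `|g2|.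
have G0 : 0 < G.
  by rewrite /G; have := normr_ge0 g0; have := normr_ge0 g1; have := normr_ge0 g2; lra.
exists (f 0 0 0 / G) => [|p0 p1 p2 p0e p1e p2e]; first exact: divr_gt0.
have lower p g : `|p| <= f 0 0 0 / G -> - (f 0 0 0 / G * `|g|) <= p * g.
  move=> pe; have : `|p * g| <= f 0 0 0 / G * `|g| by rewrite normrM ler_wpM2r.
  by rewrite ler_norml => /andP[].
have sum_le : f 0 0 0 / G * (`|g0| + `|g1| + `|g2|) <= f 0 0 0.
  by rewrite mulrAC ler_pdivrMr // ler_pM2l // /G; lra.
rewrite f_aff -/g0 -/g1 -/g2.
move: sum_le (lower _ g0 p0e) (lower _ g1 p1e) (lower _ g2 p2e).
set m := f 0 0 0 / G; rewrite !mulrDr; lra.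
Qed.

Lemma origin_interior_simplex (t1 t2 t3 t4 : lat) (f1 f2 f3 f4 : R -> R -> R -> R) :
  [/\ affine3 f1, affine3 f2, affine3 f3 & affine3 f4] ->
  [/\ 0 < f1 0 0 0, 0 < f2 0 0 0, 0 < f3 0 0 0 & 0 < f4 0 0 0] ->
  (forall p0 p1 p2, let w f := f p0 p1 p2 in let x t k := (t k 0)%:~R in
    [/\ w f1 + w f2 + w f3 + w f4 = 1,
        p0 = w f1 * x t1 0 + w f2 * x t2 0 + w f3 * x t3 0 + w f4 * x t4 0,
        p1 = w f1 * x t1 1 + w f2 * x t2 1 + w f3 * x t3 1 + w f4 * x t4 1 &
        p2 = w f1 * x t1 2 + w f2 * x t2 2 + w f3 * x t3 2 + w f4 * x t4 2]) ->
  origin_interior R [:: t1; t2; t3; t4].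
Proof.
move=> [a1 a2 a3 a4] [p1 p2 p3 p4] bary.
have [e1 e1p E1] := affine3_ge0_near0 a1 p1; have [e2 e2p E2] := affine3_ge0_near0 a2 p2.
have [e3 e3p E3] := affine3_ge0_near0 a3 p3; have [e4 e4p E4] := affine3_ge0_near0 a4 p4.
apply/origin_interior_box; exists (Num.min (Num.min e1 e2) (Num.min e3 e4)).
  by rewrite !lt_min e1p e2p e3p e4p.
move=> Y Ye; have Yk k : [/\ `|Y k 0| <= e1, `|Y k 0| <= e2, `|Y k 0| <= e3 & `|Y k 0| <= e4].
  by move: (Ye k); rewrite !le_min => /andP[/andP[-> ->] /andP[-> ->]].
have [Y01 Y02 Y03 Y04] := Yk 0; have [Y11 Y12 Y13 Y14] := Yk 1.
have [Y21 Y22 Y23 Y24] := Yk 2.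
have [sum1 Y0 Y1 Y2] := bary (Y 0 0) (Y 1 0) (Y 2 0).
apply: in_hull4 sum1 _; first by split; [apply: E1 | apply: E2 | apply: E3 | apply: E4].
by apply: cV3_ext; rewrite !mxE.
Qed.

Lemma fano_rem V v : uniq V -> fano R V -> v \in V ->
  origin_interior R (rem v V) -> fano R (rem v V).
Proof.
move=> uV [Vvert [Vlat _]] vV remint; split; [|split] => //.
  move=> w; rewrite mem_rem_uniq // inE => /andP[_ wV] w_hull; apply: (Vvert w wV).
  move: w_hull; apply: in_hull_subset => x.
  by rewrite !mem_rem_uniq ?rem_uniq // !inE => /andP[-> /mem_rem ->].
have rem_sub : {subset rem v V <= V} by move=> x /mem_rem.
move=> p p_hull; have [pV|->] := Vlat p (in_hull_subset rem_sub p_hull); last by right.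
left; rewrite mem_rem_uniq // inE pV andbT; apply/eqP => pv.
by apply: (Vvert v vV); move: p_hull; rewrite pv.
Qed.

End ConvexHull.

Section Pyramid.
Variable R : realType.
Local Notation X := (toR R).
Local Notation "x %:r" := (x%:~R : R) (at level 2, format "x %:r").

Definition pyramid (D a b c : int) : seq lat :=
  [:: pt a b c; pt D 0 0; pt D D 0; pt D D D; pt D 0 D].

Lemma form_pt (p q r : int) a b c :
  ((\row_j (nth 0 [:: p; q; r] j)%:r) *m X (pt a b c)) 0 0 = (p * a + q * b + r * c)%:r.
Proof. by rewrite !mxE sum3 !mxE /= !intrD !intrM. Qed.

Lemma pyramid_form_eq0 D a b c (p q r : int) : origin_interior R (pyramid D a b c) ->
  [/\ 0 <= p * a + q * b + r * c, 0 <= p * D, 0 <= (p + q) * D,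
      0 <= (p + q + r) * D & 0 <= (p + r) * D] ->
  [/\ p = 0, q = 0 & r = 0].
Proof.
move=> Pint [? ? ? ? ?]; pose v : 'rV[R]_3 := \row_j (nth 0 [:: p; q; r] j)%:r.
have v0 : v = 0.
  apply: origin_interior_form_ge0 Pint _ => x; rewrite !inE.
  by case/orP=> [|/or4P[]] /eqP->; rewrite form_pt ler0z; lia.
have coef (j : 'I_3) : (nth 0 [:: p; q; r] j)%:r == 0 :> R.
  by have := congr1 (fun w : 'rV[R]_3 => w 0 j) v0; rewrite !mxE => ->.
by split; apply/eqP; rewrite -(intr_eq0 R); [exact: coef 0 | exact: coef 1 | exact: coef 2].
Qed.

Lemma pyramid_interior_apex D a b c : 0 < D -> origin_interior R (pyramid D a b c) ->
  [/\ a < 0, b < 0, c < 0, a < b & a < c].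
Proof.
move=> D0 Pint; have no_form p q r := @pyramid_form_eq0 D a b c p q r Pint.
split; rewrite ltNge; apply/negP => ge0.
- by have [] := no_form 1 0 0 ltac:(split; lia); lia.
- by have [] := no_form 0 1 0 ltac:(split; lia); lia.
- by have [] := no_form 0 0 1 ltac:(split; lia); lia.
- by have [] := no_form 1 (-1) 0 ltac:(split; lia); lia.
- by have [] := no_form 1 0 (-1) ltac:(split; lia); lia.
Qed.

(* Barycentric coordinates: [g] is the weight of the apex, the base weights solve
   for the remaining point in the base square. *)
Lemma pyramid_face_interior D a b c : 0 < D -> a < b -> a < c -> b + c < a ->
  origin_interior R [:: pt a b c; pt D D 0; pt D D D; pt D 0 D].
Proof.
move=> D0 ab ac bca.
have Dr : 0 < D%:r by rewrite ltr0z.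
have Da : 0 < D%:r - a%:r by rewrite subr_gt0 ltr_int; lia.
have [lt_ab lt_ac lt_bca] : [/\ a%:r < b%:r, a%:r < c%:r & b%:r + c%:r < a%:r :> R].
  by rewrite -intrD !ltr_int.
pose g p0 := (D%:r - p0) / (D%:r - a%:r).
pose u p0 p1 := (p1 - g p0 * b%:r) / D%:r.
pose w p0 p2 := (p2 - g p0 * c%:r) / D%:r.
apply: (origin_interior_simplex (f1 := fun p0 _ _ => g p0)
  (f2 := fun p0 _ p2 => 1 - g p0 - w p0 p2)
  (f3 := fun p0 p1 p2 => u p0 p1 + w p0 p2 - (1 - g p0))
  (f4 := fun p0 p1 _ => 1 - g p0 - u p0 p1)).
- by split=> p0 p1 p2 /=; rewrite /u /w /g; field; rewrite !gt_eqF.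
- have pos0 e n : e = n / (D%:r - a%:r) -> 0 < n -> 0 < e.
    by move=> -> n0; apply: divr_gt0.
  rewrite /u /w /g; split.
  + by apply: (pos0 _ D%:r) => //; rewrite subr0.
  + by apply: (pos0 _ (c%:r - a%:r)); [field; rewrite !gt_eqF | lra].
  + by apply: (pos0 _ (a%:r - b%:r - c%:r)); [field; rewrite !gt_eqF | lra].
  + by apply: (pos0 _ (b%:r - a%:r)); [field; rewrite !gt_eqF | lra].
- move=> p0 p1 p2 /=; rewrite !mxE /= /u /w /g.
  by split; field; rewrite !gt_eqF.
Qed.

Lemma origin_interior_involution (M : 'M[int]_3) W : M *m M = 1 ->
  origin_interior R (map (mulmx M) W) <-> origin_interior R W.
Proof.
move=> MK; apply: origin_interior_map.
have MRK : map_mx (fun z : int => z%:~R : R) M *m map_mx (fun z : int => z%:~R : R) M = 1.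
  by rewrite -map_mxM MK map_mx1.
by have [] := mulmx1_unit MRK.
Qed.

Lemma pyramid_face_interior_y D a b c : 0 < D -> b < 0 -> a < c -> c < b ->
  origin_interior R [:: pt a b c; pt D 0 0; pt D D D; pt D 0 D].
Proof.
move=> D0 *; have := @pyramid_face_interior D a (a - b) c D0 ltac:(lia) ltac:(lia) ltac:(lia).
rewrite -(origin_interior_involution _ flip_yK).
have -> : map (mulmx flip_y) [:: pt a (a - b) c; pt D D 0; pt D D D; pt D 0 D]
  = [:: pt a b c; pt D 0 0; pt D 0 D; pt D D D] by rewrite /= !flip_y_pt subKr subrr subr0.
by apply: origin_interior_perm; apply/permP => P /=; lia.
Qed.

Lemma pyramid_face_interior_z D a b c : 0 < D -> c < 0 -> a < b -> b < c ->
  origin_interior R [:: pt a b c; pt D 0 0; pt D D 0; pt D D D].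
Proof.
move=> D0 *; have := @pyramid_face_interior D a b (a - c) D0 ltac:(lia) ltac:(lia) ltac:(lia).
rewrite -(origin_interior_involution _ flip_zK).
have -> : map (mulmx flip_z) [:: pt a b (a - c); pt D D 0; pt D D D; pt D 0 D]
  = [:: pt a b c; pt D D D; pt D D 0; pt D 0 0] by rewrite /= !flip_z_pt subKr subrr subr0.
by apply: origin_interior_perm; apply/permP => P /=; lia.
Qed.

Lemma pyramid_face_interior_yz D a b c : 0 < D -> b < 0 -> c < 0 -> a < b + c ->
  origin_interior R [:: pt a b c; pt D 0 0; pt D D 0; pt D 0 D].
Proof.
move=> D0 *.
have := @pyramid_face_interior D a (a - b) (a - c) D0 ltac:(lia) ltac:(lia) ltac:(lia).
rewrite -(origin_interior_involution _ flip_zK) -(origin_interior_involution _ flip_yK).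
have -> : map (mulmx flip_y) (map (mulmx flip_z)
    [:: pt a (a - b) (a - c); pt D D 0; pt D D D; pt D 0 D])
  = [:: pt a b c; pt D 0 D; pt D 0 0; pt D D 0].
  by rewrite /= !flip_z_pt !flip_y_pt !subKr !subrr !subr0.
by apply: origin_interior_perm; apply/permP => P /=; lia.
Qed.

Lemma pyramid_axis_in_hull D b t : 0 < D -> b < 0 -> b <= t -> 2 * t <= D ->
  in_hull (pyramid D (2 * b) b b) (X (t *: pt 2 1 1)).
Proof.
move=> D0 b0 bt tD.
have Dr : 0 < D%:r by rewrite ltr0z.
have br : b%:r < 0 by rewrite ltrz0.
have btr : b%:r <= t%:r by rewrite ler_int.
have tDr : 2 * t%:r <= D%:r by move: tD; rewrite -(ler_int R) intrM.
have Db : D%:r - 2 * b%:r != 0 by rewrite gt_eqF //; lra.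
apply: (in_hull5 (c1 := (D%:r - 2 * t%:r) / (D%:r - 2 * b%:r))
  (c2 := (t%:r - b%:r) / (D%:r - 2 * b%:r)) (c3 := 0)
  (c4 := (t%:r - b%:r) / (D%:r - 2 * b%:r)) (c5 := 0)).
- by split=> //; apply: divr_ge0; lra.
- by field.
- by apply: cV3_ext; rewrite !mxE /= ?intrM; field.
Qed.

Lemma pyramid_axis_vertex D b t : 0 < D ->
  t *: pt 2 1 1 \in pyramid D (2 * b) b b -> t = b.
Proof. by move=> D0; rewrite scale_pt !inE => /orP[|/or4P[]] /eqP/pt_inj[]; lia. Qed.

Lemma unit_pyramid_in_hull D (p : lat) : 0 < D ->
  in_unit_pyramid ((p 0 0)%:r / D%:r) ((p 1 0)%:r / D%:r) ((p 2 0)%:r / D%:r) ->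
  in_hull (pyramid D (- (2 * D)) (- D) (- D)) (X p).
Proof.
move=> D0; have Dr : D%:r != 0 :> R by rewrite intr_eq0 gt_eqF.
set q0 := _ / D%:r; set q1 := _ / D%:r; set q2 := _ / D%:r.
have pE : X p = \col_i (nth 0 [:: q0; q1; q2] i * D%:r).
  by apply: cV3_ext; rewrite !mxE /= /q0 /q1 /q2 divfK.
rewrite pE; clearbody q0 q1 q2 => -[? ? ? ? ?].
have [le21|lt12] := leP q2 q1.
  apply: (in_hull5 (c1 := (1 - q0) / 3) (c2 := (1 + 2 * q0) / 3 - q1) (c3 := q1 - q2)
    (c4 := q2 + (1 - q0) / 3) (c5 := 0)); first (by split=> //; lra); first lra.
  by apply: cV3_ext; rewrite !mxE /= ?intrN ?intrM; lra.
apply: (in_hull5 (c1 := (1 - q0) / 3) (c2 := (1 + 2 * q0) / 3 - q2) (c3 := 0)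
  (c4 := q1 + (1 - q0) / 3) (c5 := q2 - q1)); first (by split=> //; lra); first lra.
by apply: cV3_ext; rewrite !mxE /= ?intrN ?intrM; lra.
Qed.

Lemma pyramid_dvd D (p : lat) k : p \in pyramid D (- (2 * D)) (- D) (- D) \/ p = 0 ->
  (D %| p k 0%R)%Z.
Proof.
case=> [|->]; last by rewrite mxE dvdz0.
rewrite !inE => /orP[|/or4P[]] /eqP ->; rewrite mxE;
  case: k => [[|[|[|k]]] ?] /=; rewrite ?nth_nil ?rpredN ?dvdz0 ?dvdzz //.
exact: dvdz_mull (dvdzz D).
Qed.

End Pyramid.

Section ParallelogramPyramid.
Variable R : realType.
Variables y1 y2 y3 y4 y5 : lat.
Hypothesis parallelogram : y2 + y4 = y3 + y5.
Local Notation V := [:: y1; y2; y3; y4; y5].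
Local Notation X := (toR R).
Local Notation "x %:r" := (x%:~R : R) (at level 2, format "x %:r").
Local Notation "M %:RM" := (map_mx (fun z : int => z%:~R : R) M) (at level 2).

Definition basis : 'M[int]_3 := \matrix_(i, j) (nth 0 [:: y2; y3 - y2; y5 - y2] j) i 0.

Lemma basis_pt p q r : basis *m pt p q r = p *: y2 + q *: (y3 - y2) + r *: (y5 - y2).
Proof. by apply/matrixP => i j; rewrite (ord1 j) !mxE sum3 !mxE /= ?mxE; ring. Qed.

Lemma vertices_basis : [/\ y2 = basis *m pt 1 0 0, y3 = basis *m pt 1 1 0,
  y4 = basis *m pt 1 1 1 & y5 = basis *m pt 1 0 1].
Proof.
rewrite !basis_pt !scale1r !scale0r !addr0 subrKC; split=> //.
  by rewrite addrA -parallelogram addrC addKr.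
by rewrite addrC subrK.
Qed.

Hypothesis V_interior : origin_interior R V.

Lemma basis_det_neq0 : \det basis != 0.
Proof.
apply/negP => /eqP det0; have : \det basis%:RM == 0 by rewrite det_map_mx det0 /= mulr0z.
case/det0P => v v_neq0 vB; have [y2E y3E y4E y5E] := vertices_basis.
have base0 (s : 'rV[R]_3) p : s = v \/ s = - v -> (s *m X (basis *m p)) 0 0 = 0.
  by case=> ->; rewrite ?mulNmx toR_mul mulmxA vB mul0mx ?oppr0 mxE.
have vanish (s : 'rV[R]_3) : s = v \/ s = - v -> 0 <= (s *m X y1) 0 0 -> s = 0.
  move=> sv s1; apply: origin_interior_form_ge0 V_interior _ => x.
  by rewrite !inE => /orP[/eqP-> //|/or4P[]] /eqP->; rewrite ?y2E ?y3E ?y4E ?y5E base0.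
have [v1|v1] := leP 0 ((v *m X y1) 0 0).
  by move: v_neq0; rewrite (vanish v _ v1) ?eqxx //; left.
move: v_neq0; rewrite -oppr_eq0 (vanish (- v)) ?eqxx //; first by right.
by rewrite mulNmx mxE oppr_ge0 ltW.
Qed.

Definition coord_mx : 'M[int]_3 := \det basis *: \adj basis.
Definition det2 : int := \det basis ^+ 2.

Lemma coord_mx_basis : coord_mx *m basis = det2%:M.
Proof. by rewrite -scalemxAl mul_adj_mx scale_scalar_mx /det2 expr2. Qed.

Lemma det2_gt0 : 0 < det2.
Proof. by rewrite lt0r sqrf_eq0 basis_det_neq0 sqr_ge0. Qed.

Lemma coord_mx_unit : coord_mx%:RM \in unitmx.
Proof.
have := congr1 (@determinant _ 3) coord_mx_basis; rewrite det_mulmx det_scalar => det_eq.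
rewrite unitmxE det_map_mx unitfE intr_eq0; apply: contraTneq det2_gt0 => det0.
by move: det_eq; rewrite det0 mul0r => /esym/eqP; rewrite expf_eq0 /= => /eqP->.
Qed.

Lemma coord_basis (p : lat) : coord_mx *m (basis *m p) = det2 *: p.
Proof. by rewrite mulmxA coord_mx_basis mul_scalar_mx. Qed.

Definition apex : lat := coord_mx *m y1.
Local Notation a := (apex 0 0).
Local Notation b := (apex 1 0).
Local Notation c := (apex 2 0).

Lemma coord_vertices : [/\ coord_mx *m y1 = pt a b c, coord_mx *m y2 = pt det2 0 0,
  coord_mx *m y3 = pt det2 det2 0, coord_mx *m y4 = pt det2 det2 det2 &
  coord_mx *m y5 = pt det2 0 det2].
Proof.
have [-> -> -> ->] := vertices_basis; rewrite !coord_basis !scale_pt !(mulr1, mulr0).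
by split; first exact: pt_eta.
Qed.

Lemma coord_map_vertices : map (mulmx coord_mx) V = pyramid det2 a b c.
Proof. by have [e1 e2 e3 e4 e5] := coord_vertices; rewrite /pyramid /= e2 e3 e4 e5 -e1. Qed.

Lemma apex_signs : [/\ a < 0, b < 0, c < 0, a < b & a < c].
Proof.
apply: (@pyramid_interior_apex R) det2_gt0 _.
by rewrite -coord_map_vertices (origin_interior_map _ coord_mx_unit).
Qed.

Hypothesis y2_needed : ~ origin_interior R [:: y1; y3; y4; y5].
Hypothesis y3_needed : ~ origin_interior R [:: y1; y2; y4; y5].
Hypothesis y4_needed : ~ origin_interior R [:: y1; y2; y3; y5].
Hypothesis y5_needed : ~ origin_interior R [:: y1; y2; y3; y4].

Lemma apex_on_diagonal : b = c /\ a = b + c.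
Proof.
have [a0 b0 c0 ab ac] := apex_signs; have D0 := det2_gt0.
have [e1 e2 e3 e4 e5] := coord_vertices.
have face W : origin_interior R (map (mulmx coord_mx) W) -> origin_interior R W.
  by move/(origin_interior_map _ coord_mx_unit).
have not_y2 : ~ b + c < a.
  by move=> ?; apply/y2_needed/face; rewrite /= e1 e3 e4 e5; apply: pyramid_face_interior.
have not_y3 : ~ c < b.
  by move=> ?; apply/y3_needed/face; rewrite /= e1 e2 e4 e5; apply: pyramid_face_interior_y.
have not_y4 : ~ a < b + c.
  by move=> ?; apply/y4_needed/face; rewrite /= e1 e2 e3 e5; apply: pyramid_face_interior_yz.
have not_y5 : ~ b < c.
  by move=> ?; apply/y5_needed/face; rewrite /= e1 e2 e3 e4; apply: pyramid_face_interior_z.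
by split; lia.
Qed.

Hypothesis V_lattice : forall p : lat, in_hull V (X p) -> p \in V \/ p = 0.

Lemma pyramid_coord_lattice z : in_hull (pyramid det2 a b c) (X (coord_mx *m z)) ->
  coord_mx *m z \in pyramid det2 a b c \/ coord_mx *m z = 0.
Proof.
rewrite -coord_map_vertices toR_mul (in_hull_map _ _ coord_mx_unit) => /V_lattice.
by case=> [zV|->]; [left; apply: map_f | right; apply: mulmx0].
Qed.

(* [-y1] and [y1 + y2 + y4] lie on the axis through the apex and the centre of the
   base; one of them is in the polytope, and is neither a vertex nor the origin
   unless [b = - det2]. *)
Lemma apex_eq : b = - det2.
Proof.
have [a0 b0 _ _ _] := apex_signs; have [bc abc] := apex_on_diagonal; have D0 := det2_gt0.
have [e1 e2 _ e4 _] := coord_vertices.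
have pyrE : pyramid det2 a b c = pyramid det2 (2 * b) b b by rewrite abc -bc; congr pyramid; lia.
have axis t z : coord_mx *m z = t *: pt 2 1 1 -> b <= t -> 2 * t <= det2 -> t = b \/ t = 0.
  move=> zt bt tD; have := @pyramid_coord_lattice z; rewrite zt pyrE.
  case/(_ (@pyramid_axis_in_hull R _ _ _ D0 b0 bt tD)).
    by move/(pyramid_axis_vertex D0); left.
  by move/(congr1 (fun v : lat => v 0 0)); rewrite !mxE /= => ?; right; lia.
have [small|large] := leP (- det2) (2 * b).
  suff : - b = b \/ - b = 0 by lia.
  apply: (axis _ (- y1)); try lia.
  by rewrite mulmxN e1 abc -bc -scaleN1r !scale_pt; congr pt; ring.
suff : b + det2 = b \/ b + det2 = 0 by lia.
apply: (axis _ (y1 + y2 + y4)); try lia.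
by rewrite !mulmxDr e1 e2 e4 !add_pt scale_pt abc -bc; congr pt; ring.
Qed.

Let quot (m : int) : R := m%:r / det2%:r.

Lemma quot_int m : (quot m \is a Num.int) = (det2 %| m)%Z.
Proof.
have Dr : det2%:r != 0 :> R by rewrite intr_eq0 gt_eqF ?det2_gt0.
apply/idP/idP => [/intrP[t mt]|/dvdzP[t ->]]; last by rewrite /quot intrM mulfK // intr_int.
by apply/dvdzP; exists t; apply: (@intr_inj R); rewrite intrM -mt divfK.
Qed.

Lemma pyramid_coord_dvd z k :
  in_hull (pyramid det2 (- (2 * det2)) (- det2) (- det2)) (X (coord_mx *m z)) ->
  (det2 %| (coord_mx *m z) k 0%R)%Z.
Proof.
have [bc abc] := apex_on_diagonal; have bD := apex_eq.
have pyrE : pyramid det2 a b c = pyramid det2 (- (2 * det2)) (- det2) (- det2).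
  by rewrite abc -bc bD; congr pyramid; lia.
by rewrite -pyrE => /pyramid_coord_lattice; rewrite pyrE; apply: pyramid_dvd.
Qed.

Lemma coord_int_point (z : lat) : let q := coord_mx *m z in
  int_point (quot (q 0 0)) (quot (q 1 0)) (quot (q 2 0)).
Proof.
move=> q; have D0 := det2_gt0; have Dr : det2%:r != 0 :> R by rewrite intr_eq0 gt_eqF.
case: (boolP [&& quot (q 0 0) \is a Num.int, quot (q 1 0) \is a Num.int
              & quot (q 2 0) \is a Num.int]).
  by case/and3P.
move=> nint; have nint' : ~ int_point (quot (q 0 0)) (quot (q 1 0)) (quot (q 2 0)).
  by case=> *; case/negP: nint; apply/and3P.
have [k [i [j [l [inP nint_k]]]]] := unit_pyramid_covering nint'.
pose w := k *: z + basis *m pt i j l.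
have wE n : quot ((coord_mx *m w) n 0) = k%:r * quot (q n 0) + (pt i j l n 0)%:r.
  rewrite mulmxDr -scalemxAr coord_basis /quot !mxE intrD !intrM.
  by field; rewrite ?mulf_neq0 ?intr_eq0 ?basis_det_neq0.
have [i0 j0 l0] := ptE i j l.
have : in_unit_pyramid (quot ((coord_mx *m w) 0 0)) (quot ((coord_mx *m w) 1 0))
    (quot ((coord_mx *m w) 2 0)) by rewrite !wE i0 j0 l0.
move/(unit_pyramid_in_hull D0) => w_hull; case: nint_k; split.
- by have := @pyramid_coord_dvd w 0 w_hull; rewrite -quot_int wE i0.
- by have := @pyramid_coord_dvd w 1 w_hull; rewrite -quot_int wE j0.
- by have := @pyramid_coord_dvd w 2 w_hull; rewrite -quot_int wE l0.
Qed.

Lemma coord_dvd (z : lat) k : (det2 %| (coord_mx *m z) k 0%R)%Z.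
Proof.
have [q0 q1 q2] := coord_int_point z; rewrite -quot_int.
by case: k => [[|[|[|//]]] lt_k]; [move: q0 | move: q1 | move: q2];
  congr (quot (_ _ _) \is a _); apply: val_inj.
Qed.

Definition basis_inv : 'M[int]_3 := \matrix_(i, j) (coord_mx i j %/ det2)%Z.

Lemma coord_mx_scale : coord_mx = det2 *: basis_inv.
Proof.
apply/matrixP => i j; rewrite [RHS]mxE [basis_inv i j]mxE mulrC divzK //.
by have := coord_dvd (delta_mx j 0) i; rewrite -colE mxE.
Qed.

Lemma basis_inv_basis : basis_inv *m basis = 1.
Proof.
apply: (scalemx_int_inj (lt0r_neq0 det2_gt0)).
by rewrite scalemxAl -coord_mx_scale coord_mx_basis scalemx1.
Qed.

Lemma basis_inv_vertices : map (mulmx basis_inv) V = pyramid 1 (-2) (-1) (-1).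
Proof.
have div (y p : lat) : coord_mx *m y = det2 *: p -> basis_inv *m y = p.
  by rewrite coord_mx_scale -scalemxAl => /(scalemx_int_inj (lt0r_neq0 det2_gt0)).
have [bc abc] := apex_on_diagonal; have bD := apex_eq.
have [e1 e2 e3 e4 e5] := coord_vertices.
rewrite /pyramid /= (div y1 (pt (-2) (-1) (-1))) ?(div y2 (pt 1 0 0)) ?(div y3 (pt 1 1 0))
  ?(div y4 (pt 1 1 1)) ?(div y5 (pt 1 0 1)) //.
all: by rewrite ?e1 ?e2 ?e3 ?e4 ?e5 scale_pt ?abc -?bc ?bD; congr pt; ring.
Qed.

Theorem parallelogram_normal_form : exists A : 'M[int]_3, GL3Z A /\
  map (mulmx A) V = [:: pt (-1) (-1) 0; pt 1 0 0; pt 1 1 1; pt 0 1 0; pt 0 0 (-1)].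
Proof.
exists (normal_form *m basis_inv); split.
  by rewrite /GL3Z unitmx_mul normal_form_unit; case/mulmx1_unit: basis_inv_basis.
have -> : map (mulmx (normal_form *m basis_inv)) V
    = map (mulmx normal_form) (map (mulmx basis_inv) V).
  by rewrite -map_comp; apply: eq_map => v; rewrite /= mulmxA.
by rewrite basis_inv_vertices /pyramid /= !mul_pt !mxE.
Qed.

End ParallelogramPyramid.

Lemma minimal_fano_drop (R : realType) (V W : seq lat) v : uniq V -> minimal_fano R V ->
  perm_eq V (v :: W) -> ~ origin_interior R W.
Proof.
move=> uV [fV minV] pV Wint; have vV : v \in V by rewrite (perm_mem pV) mem_head.
apply: (minV v vV); apply: fano_rem => //; apply: origin_interior_perm Wint.
rewrite -(perm_cons v); apply: (@perm_trans _ V); first by rewrite perm_sym.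
exact: perm_to_rem.
Qed.

Lemma minimal_fano_parallelogram (R : realType) (xs : seq lat) (y1 y2 y3 y4 y5 : lat) :
  uniq xs -> minimal_fano R xs -> perm_eq xs [:: y1; y2; y3; y4; y5] ->
  y2 + y4 = y3 + y5 ->
  exists A : 'M[int]_3, GL3Z A /\
    perm_eq [seq A *m v | v <- xs]
            [:: pt 1 0 0; pt 0 1 0; pt (-1) (-1) 0; pt 1 1 1; pt 0 0 (-1)].
Proof.
move=> uX mX pX par; have [[_ [Xlat Xint]] _] := mX.
have pY : perm_eq [:: y1; y2; y3; y4; y5] xs by rewrite perm_sym.
have needed v W : perm_eq [:: y1; y2; y3; y4; y5] (v :: W) -> ~ origin_interior R W.
  by move=> pYv; apply: minimal_fano_drop uX mX (perm_trans pX pYv).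
have Ylat p : in_hull [:: y1; y2; y3; y4; y5] (toR R p) ->
    p \in [:: y1; y2; y3; y4; y5] \/ p = 0.
  by move/(in_hull_perm pY)/Xlat; rewrite (perm_mem pX).
have n2 := needed y2 [:: y1; y3; y4; y5] ltac:(by apply/permP => P /=; lia).
have n3 := needed y3 [:: y1; y2; y4; y5] ltac:(by apply/permP => P /=; lia).
have n4 := needed y4 [:: y1; y2; y3; y5] ltac:(by apply/permP => P /=; lia).
have n5 := needed y5 [:: y1; y2; y3; y4] ltac:(by apply/permP => P /=; lia).
have [A [GA AY]] := parallelogram_normal_form par (origin_interior_perm pX Xint) n2 n3 n4 n5 Ylat.
exists A; split=> //; apply: perm_trans (perm_map _ pX) _.
by rewrite AY; apply/permP => P /=; lia.
Qed.

Theorem lemma4p5 (R : realType) (x1 x2 x3 x4 x5 : 'cV[int]_3) :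
  uniq [:: x1; x2; x3; x4; x5] ->
  minimal_fano R [:: x1; x2; x3; x4; x5] ->
  [\/ x2 + x4 = x3 + x5, x2 + x3 = x4 + x5 | x2 + x5 = x3 + x4] ->
  exists A : 'M[int]_3, GL3Z A /\
    perm_eq [seq A *m v | v <- [:: x1; x2; x3; x4; x5]]
            [:: pt 1 0 0; pt 0 1 0; pt (-1) (-1) 0; pt 1 1 1; pt 0 0 (-1)].
Proof.
move=> uX mX [par|par|par].
- exact: minimal_fano_parallelogram uX mX (perm_refl _) par.
- apply: (@minimal_fano_parallelogram R _ x1 x2 x4 x3 x5 uX mX _ par).
  by apply/permP => P /=; lia.
- apply: (@minimal_fano_parallelogram R _ x1 x2 x3 x5 x4 uX mX _ par).
  by apply/permP => P /=; lia.
Qed.
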